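(* Fix a prime power $q$ and real numbers $0\le\rho'\le r'\le 1/2$ with $r'>0$. Define $$k_{\mathrm{C}}(r',\rho') = \liminf_{n\to\infty}\frac{\log_q K_{\mathrm{C}}(q,n,\lfloor r'n\rfloor,\lfloor\rho'n\rfloor)}{\log_q{n\brack \lfloor r'n\rfloor}}.$$ Then $k_{\mathrm{C}}(r',\rho') = 1 - \frac{\rho'(1-\rho')}{r'(1-r')}$.
   Context: ${m\brack k}=\prod_{i=0}^{k-1}\frac{q^m-q^i}{q^k-q^i}$ is the Gaussian binomial. $E_r(q,n)$ is the set of $r$-dimensional subspaces of $\mathrm{GF}(q)^n$ with injection distance $d_{\mathrm{I}}(U,V)=\dim(U+V)-\min\{\dim U,\dim V\}$; the covering radius of a nonempty $\mathcal{C}\subseteq E_r(q,n)$ is $\max_U\min_{C\in\mathcal{C}}d_{\mathrm{I}}(U,C)$, and $K_{\mathrm{C}}(q,n,r,\rho)$ is the minimum cardinality of a subset of $E_r(q,n)$ with covering radius at most $\rho$. *)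

From HB Require Import structures.
From mathcomp Require Import all_boot all_order all_algebra all_field.
From mathcomp Require Import all_classical all_reals all_analysis.
Set Implicit Arguments. Unset Strict Implicit. Unset Printing Implicit Defensive.
Import Order.TTheory GRing.Theory Num.Theory.

(* Subspaces of GF(q)^n, with GF(q) any finite field F (q = #|F|). *)
Definition subsp (F : finFieldType) (n : nat) := {vspace 'rV[F]_n}.
HB.instance Definition _ (F : finFieldType) n := SubChoice.on (subsp F n).
HB.instance Definition _ (F : finFieldType) n := [Finite of subsp F n by <:].

Definition injdist (F : finFieldType) (n : nat) (U V : subsp F n) : nat :=
  (\dim (U + V)%VS - minn (\dim U) (\dim V))%N.

Definition Er (F : finFieldType) (n r : nat) : {set subsp F n} :=
  [set U : subsp F n | \dim U == r].

Definition covering_code (F : finFieldType) (n r rho : nat)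
    (C : {set subsp F n}) : bool :=
  [&& C \subset @Er F n r, (0 < #|C|)%N &
      [forall U in @Er F n r, exists X in C, injdist U X <= rho]].

(* K_C(q,n,r,rho) : minimum cardinality of such a code.  The seed value
   #|E_r| is itself attained (E_r is a code with covering radius 0), so this is
   exactly the minimum. *)
Definition K_C (F : finFieldType) (n r rho : nat) : nat :=
  \big[minn/#|@Er F n r|]_(C : {set subsp F n} | @covering_code F n r rho C) #|C|.

Local Open Scope ring_scope.

Definition gauss_binom (R : realType) (q : R) (m k : nat) : R :=
  \prod_(i < k) ((q ^+ m - q ^+ i) / (q ^+ k - q ^+ i)).

Definition logq (R : realType) (q x : R) : R := ln x / ln q.

Definition kC_seq (R : realType) (F : finFieldType) (r' rho' : R) (n : nat) : R :=
  let q : R := (#|F|)%:R in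
  let r := Num.truncn (r' * n%:R) in
  let rho := Num.truncn (rho' * n%:R) in
  logq q (@K_C F n r rho)%:R / logq q (gauss_binom q n r).

Definition kC (R : realType) (F : finFieldType) (r' rho' : R) : \bar R :=
  limn_einf (fun n => (@kC_seq R F r' rho' n)%:E).

From HB Require Import structures.
From mathcomp Require Import all_boot all_order all_algebra all_field.
From mathcomp Require Import zify.
Set Implicit Arguments. Unset Strict Implicit. Unset Printing Implicit Defensive.
Import Order.TTheory GRing.Theory Num.Theory.

(* Counting spanning tuples of independent vectors shows that E_r(q,n) has
   q^(r(n-r) + O(n)) elements and that the ball of radius rho around any of
   them has q^(rho(n-rho) + O(n)) elements.  The sphere-covering bound and a
   greedy covering, which by averaging always finds a ball covering a fraction
   (min ball)/|E_r| of the still uncovered subspaces, then give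
   log_q K_C = r(n-r) - rho(n-rho) + O(n), while log_q [n r] = r(n-r) + O(n).
   With r = r'n and rho = rho'n, dividing by n^2 yields the limit. *)

Lemma card_set_pair (A B : finType) (P : A -> B -> bool) :
  #|[set p : A * B | P p.1 p.2]| = \sum_(a : A) #|[set b | P a b]|.
Proof.
rewrite -(sum1dep_card (fun p => P p.1 p.2)).
rewrite (eq_bigr (fun a => \sum_(b | P a b) 1)) ?pair_big_dep // => a _.
by rewrite sum1dep_card.
Qed.

Lemma card_set_prod (A B : finType) (P : pred A) (Q : pred B) :
  #|[set p : A * B | P p.1 && Q p.2]| = #|[set a | P a]| * #|[set b | Q b]|.
Proof. by rewrite -cardsX; apply: eq_card => -[a b]; rewrite !inE. Qed.

Lemma card_set_pair_ge (A B : finType) (P : pred A) (Q : A -> B -> bool) m :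
  (forall a, P a -> m <= #|[set b | Q a b]|) ->
  (#|[set a | P a]| * m <= #|[set p : A * B | P p.1 && Q p.1 p.2]|).
Proof.
move=> Qm; rewrite (card_set_pair (fun a b => P a && Q a b)) -sum_nat_const.
rewrite big_mkcond leq_sum // => a _; rewrite inE.
case: ifP => // Pa; apply: leq_trans (Qm a Pa) (subset_leq_card _).
by apply/subsetP => b; rewrite !inE.
Qed.

Lemma card_set_tuple_cons (T : finType) k (P : pred (k.+1.-tuple T)) :
  #|[set t | P t]| = \sum_(t : k.-tuple T) #|[set x | P (cons_tuple x t)]|.
Proof.
rewrite -(card_set_pair (fun t x => P (cons_tuple x t))).
have cons_inj : injective (fun p : k.-tuple T * T => cons_tuple p.2 p.1).
  by move=> [t x] [u y] /(congr1 val) [-> /val_inj ->].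
rewrite -(card_imset _ cons_inj); apply: eq_card => t; rewrite inE.
have tE : cons_tuple (thead t) (behead_tuple t) = t.
  by apply: val_inj; case: t => -[].
apply/idP/imsetP => [Pt | [[u x]]]; last by rewrite inE /= => Px ->.
by exists (behead_tuple t, thead t); rewrite ?inE /= tE.
Qed.

Lemma card_set_in_sum (T : finType) (A : {set T}) (P : pred T) :
  #|[set x in A | P x]| = \sum_(x in A) P x.
Proof.
rewrite -sum1_card big_mkcond [RHS]big_mkcond /=.
by apply: eq_bigr => x _; rewrite inE; case: (x \in A); case: (P x).
Qed.

Section Fibers.
Variables (D S : finType) (A : {set D}) (B : {set S}) (f : D -> S).
Hypothesis fAB : {in A, forall a, f a \in B}.

Lemma card_sum_fibers :
  #|A| = \sum_(s in B) #|[set a in A | f a == s]|.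
Proof.
rewrite -sum1_card (partition_big f (mem B)) //=.
by apply: eq_bigr => s _; rewrite -sum1dep_card.
Qed.

Lemma card_ge_fibers m :
  (forall s, s \in B -> m <= #|[set a in A | f a == s]|) -> #|B| * m <= #|A|.
Proof. by move=> fm; rewrite card_sum_fibers -sum_nat_const leq_sum. Qed.

Lemma card_le_fibers m :
  (forall s, s \in B -> #|[set a in A | f a == s]| <= m) -> #|A| <= #|B| * m.
Proof. by move=> fm; rewrite card_sum_fibers -sum_nat_const leq_sum. Qed.

End Fibers.

Lemma leq_mul_predr m k : m * k <= m * k.-1 + m.
Proof. by case: k => [|k]; rewrite ?muln0 // mulnS addnC. Qed.

Lemma exp_lt_exp2_mul m k : m ^ k < 2 ^ (m * k).+1.
Proof.
have base_le : m ^ k <= (2 ^ m) ^ k.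
  by case: k => [|k]; rewrite ?expn0 // leq_exp2r //; apply/ltnW/ltn_expl.
have : 0 < (2 ^ m) ^ k by rewrite !expn_gt0.
by rewrite expnS expnM; lia.
Qed.

Lemma double_succ_le_exp m k : 1 < m -> 2 * (m * (k * k + k)).+1 <= m ^ (k.*2 + 2).
Proof.
move=> m_gt1.
have quad_le : k * k + k + 1 <= 4 ^ k by elim: k => // k IHk; rewrite expnS; nia.
have : 4 ^ k <= m ^ k.*2.
  by rewrite -mul2n expnM; case: k {quad_le} => // k; rewrite leq_exp2r // (@leq_exp2r 2 m 2).
rewrite expnD; nia.
Qed.

Section GreedyCovering.
Variables (T : finType) (E : {set T}) (adj : rel T).
Hypothesis adj_sym : symmetric adj.

Definition nbhd x := [set y in E | adj x y].
Definition covered (C : {set T}) := [set x | [exists c in C, adj x c]].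

Lemma covered_setU1 c (C : {set T}) x :
  (x \in covered (c |: C)) = adj x c || (x \in covered C).
Proof.
rewrite !inE; apply/exists_inP/orP.
  by case=> c' /setU1P [-> | c'C] xc'; [left | right; apply/exists_inP; exists c'].
case=> [xc | /exists_inP [c' c'C xc']].
  by exists c; rewrite ?setU11.
by exists c'; rewrite ?setU1r.
Qed.

Lemma coveredS (C D : {set T}) : C \subset D -> covered C \subset covered D.
Proof.
move=> CD; apply/subsetP => x; rewrite !inE => /exists_inP [c cC xc].
by apply/exists_inP; exists c; rewrite ?(subsetP CD).
Qed.

Lemma card_le_sum_nbhd (C : {set T}) :
  E \subset covered C -> #|E| <= \sum_(c in C) #|nbhd c|.
Proof.
move=> EC; pose center x := odflt x [pick c in C | adj x c].
have centerP x : x \in E -> center x \in C /\ adj x (center x).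
  move=> /(subsetP EC); rewrite inE => /exists_inP [c cC xc].
  by rewrite /center; case: pickP => [c' /andP [] // | /(_ c)]; rewrite cC xc.
rewrite (card_sum_fibers (f := center) (B := C)); last by move=> x /centerP [].
apply: leq_sum => c _; apply: subset_leq_card; apply/subsetP => x.
by rewrite !inE => /andP [xE /eqP <-]; rewrite xE adj_sym; case: (centerP x xE).
Qed.

Lemma exists_dense_nbhd (S : {set T}) b :
  S \subset E -> (forall x, x \in E -> b <= #|nbhd x|) -> 0 < #|E| ->
  exists2 c, c \in E & (#|S| * b <= #|E| * #|S :&: nbhd c|).
Proof.
move=> SE nbhd_ge E_gt0.
have [c cE cmax] := eq_bigmax_cond (fun c => #|S :&: nbhd c|) E_gt0.
exists c => //.
have SnbhdE c' : S :&: nbhd c' = [set x in S | adj c' x].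
  by apply/setP => x; rewrite !inE; case xS: (x \in S); rewrite //= (subsetP SE x xS).
apply: (@leq_trans (\sum_(x in S) #|nbhd x|)).
  by rewrite -sum_nat_const leq_sum // => x /(subsetP SE)/nbhd_ge.
have double_count : \sum_(x in S) #|nbhd x| = \sum_(c' in E) #|S :&: nbhd c'|.
  rewrite [RHS](eq_bigr (fun c' => \sum_(x in S) adj c' x)) => [|c' _]; last first.
    by rewrite SnbhdE card_set_in_sum.
  rewrite exchange_big; apply: eq_bigr => x _; rewrite card_set_in_sum.
  by apply: eq_bigr => c' _; rewrite adj_sym.
by rewrite double_count -cmax -sum_nat_const leq_sum // => c' c'E; apply: leq_bigmax_cond.
Qed.

Variable b : nat.
Hypotheses (b_gt0 : 0 < b) (nbhd_ge : forall x, x \in E -> b <= #|nbhd x|).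

Lemma greedy_step (S C : {set T}) t : S \subset E -> 0 < t -> t <= #|S :\: covered C| ->
  exists2 c, c \in E &
    (t * b + #|E| * #|S :&: covered C| <= #|E| * #|S :&: covered (c |: C)|).
Proof.
move=> SE t_gt0 leSt; set S' := S :\: covered C.
have S'E : S' \subset E by apply: subset_trans (subsetDl _ _) SE.
have E_gt0 : 0 < #|E|.
  by apply: leq_trans (subset_leq_card S'E); apply: leq_trans leSt.
have [c cE dense] := exists_dense_nbhd S'E nbhd_ge E_gt0.
exists c => //.
have gain : #|S' :&: nbhd c| + #|S :&: covered C| <= #|S :&: covered (c |: C)|.
  rewrite -(cardsID (covered C) (S :&: covered (c |: C))) addnC.
  apply: leq_add; apply: subset_leq_card; apply/subsetP => x.
    by rewrite !in_setI covered_setU1 => /andP [-> ->]; rewrite orbT.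
  rewrite /S' /nbhd !(in_setI, in_setD) covered_setU1 inE.
  by case/andP=> /andP [-> ->] /andP [_ cx]; rewrite adj_sym cx.
apply: leq_trans (_ : #|E| * (#|S' :&: nbhd c| + #|S :&: covered C|) <= _).
  by rewrite mulnDr leq_add2r (leq_trans _ dense) // leq_mul2r leSt orbT.
by rewrite leq_mul2l gain orbT.
Qed.

Lemma greedy_rounds (S : {set T}) t i : S \subset E -> 0 < t ->
  exists C : {set T}, [/\ C \subset E, #|C| <= i &
    (#|S :\: covered C| < t) \/ (i * t * b <= #|E| * #|S :&: covered C|)].
Proof.
move=> SE t_gt0; elim: i => [|i [C [CE Ci progress]]].
  by exists set0; rewrite sub0set cards0; split => //; right; rewrite !mul0n.
have [small | large] := ltnP #|S :\: covered C| t.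
  by exists C; split => //; [apply: leqW | left].
have [c cE gain] := greedy_step SE t_gt0 large.
exists (c |: C); split.
- by rewrite subUset sub1set cE.
- by rewrite cardsU1 -add1n leq_add ?leq_b1.
right; case: progress => [|covered_ge]; first by rewrite ltnNge large.
by rewrite mulSn mulnDl (leq_trans _ gain) // leq_add2l.
Qed.

Lemma greedy_halving (S : {set T}) j : S \subset E -> #|S| < 2 ^ j.+1 ->
  exists C : {set T},
    [/\ C \subset E, #|C| <= (#|E| %/ b).+1 & #|S :\: covered C| < 2 ^ j].
Proof.
move=> SE ltSj.
have [C [CE Csize [small | large]]] := greedy_rounds (#|E| %/ b).+1 SE (expn_gt0 2 j).
  by exists C.
exists C; split => //.
have : #|E| * 2 ^ j < #|E| * #|S :&: covered C|.
  by apply: leq_trans large; rewrite mulnAC ltn_pmul2r ?expn_gt0 // ltn_ceil.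
rewrite ltn_mul2l => /andP [_ covered_gt].
by have := cardsID (covered C) S; rewrite expnS in ltSj; lia.
Qed.

Lemma greedy_cover (S : {set T}) j : S \subset E -> #|S| < 2 ^ j ->
  exists C : {set T},
    [/\ C \subset E, #|C| <= (#|E| %/ b).+1 * j & S \subset covered C].
Proof.
elim: j S => [|j IHj] S SE ltSj.
  exists set0; rewrite sub0set cards0 muln0; split => //.
  by move: ltSj; rewrite expn0 ltnS leqn0 cards_eq0 => /eqP ->; apply: sub0set.
have [C1 [C1E C1size small]] := greedy_halving SE ltSj.
have [C2 [C2E C2size coverC2]] := IHj _ (subset_trans (subsetDl _ _) SE) small.
exists (C1 :|: C2); split.
- by rewrite subUset C1E C2E.
- by rewrite (leq_trans (leq_card_setU _ _)) // mulnS leq_add.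
apply/subsetP => x xS; have [xC1 | xNC1] := boolP (x \in covered C1).
  by rewrite (subsetP (coveredS (subsetUl C1 C2))).
by rewrite (subsetP (coveredS (subsetUr C1 C2))) // (subsetP coverC2) // inE xNC1.
Qed.

End GreedyCovering.

Section Subspaces.
Variables (F : finFieldType) (n : nat).
Local Notation T := 'rV[F]_n.
Local Notation q := #|F|.

Lemma card_field_gt1 : 1 < q. Proof. exact: finNzRing_gt1. Qed.

Lemma dim_rV : \dim (fullv : {vspace T}) = n.
Proof. by rewrite dimvf /dim /= mul1n. Qed.

Lemma dim_span_free (xs : seq T) : free xs -> \dim <<xs>> = size xs.
Proof. exact: eqP. Qed.

Lemma span_free_eq (xs : seq T) (V : {vspace T}) :
  all [in V] xs -> free xs -> size xs = \dim V -> <<xs>>%VS = V.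
Proof.
move=> /allP sV fxs sizexs; apply/eqP; rewrite eqEdim dim_span_free // sizexs leqnn.
by rewrite andbT; apply/span_subvP.
Qed.

Lemma card_vspace_diff (X W : {vspace T}) : \dim W < \dim X ->
  q ^ (\dim X).-1 <= #|[set x in X | x \notin W]|.
Proof.
move=> ltWX; set d := \dim X.
have d_gt0 : 0 < d by apply: leq_ltn_trans ltWX.
have capWX : \dim (X :&: W) <= d.-1.
  by rewrite -ltnS prednK // (leq_ltn_trans (dimvS (capvSr X W))).
have := cardsID [set x in W] [set x in X].
have -> : [set x in X] :&: [set x in W] = [set x in (X :&: W)%VS].
  by apply/setP => x; rewrite !inE memv_cap.
have -> : [set x in X] :\: [set x in W] = [set x in X | x \notin W].
  by apply/setP => x; rewrite !inE andbC.
have qd : q ^ d = q * q ^ d.-1 by rewrite -expnS prednK.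
rewrite (cardsE (mem X)) (cardsE (mem (X :&: W)%VS)) !card_vspace -/d qd.
have := leq_pexp2l (ltnW card_field_gt1) capWX; have := card_field_gt1.
move: #|[set x | _ && _]| (q ^ d.-1) (q ^ \dim _) => c b a; nia.
Qed.

Lemma card_tuples_in_vspace (X : {vspace T}) k :
  #|[set t : k.-tuple T | all [in X] t]| = q ^ (k * \dim X).
Proof.
elim: k => [|k IHk].
  transitivity #|{: 0.-tuple T}|; last by rewrite card_tuple.
  by apply: eq_card => t; rewrite inE tuple0.
rewrite card_set_tuple_cons mulSn expnD -IHk [RHS]mulnC -sum_nat_const [RHS]big_mkcond.
apply: eq_bigr => t _; rewrite inE; case: ifP => tX.
  by rewrite -card_vspace -cardsE; apply: eq_card => x; rewrite !inE /= tX andbT.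
by apply: eq_card0 => x; rewrite inE /= tX andbF.
Qed.

Lemma card_free_ext_ge (X : {vspace T}) (xs : seq T) k :
  free xs -> k + size xs <= \dim X ->
  (q ^ (k * (\dim X).-1) <= #|[set t : k.-tuple T | all [in X] t && free (t ++ xs)]|).
Proof.
move=> fxs; elim: k => [|k IHk] leX.
  by rewrite expn0 card_gt0; apply/set0Pn; exists [tuple]; rewrite inE.
rewrite card_set_tuple_cons mulSn expnD mulnC.
apply: leq_trans (leq_mul (IHk _) (leqnn _)) _; first by rewrite (leq_trans _ leX).
rewrite -sum_nat_const big_mkcond leq_sum // => t _.
rewrite inE; case: ifP => // /andP [tX ftxs].
apply: leq_trans (card_vspace_diff (W := <<t ++ xs>>%VS) _) _.
  by rewrite (leq_ltn_trans (dim_span _)) // size_cat size_tuple.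
apply: subset_leq_card; apply/subsetP => x; rewrite !inE /= => /andP [xX xNt].
by rewrite xX tX /= free_cons xNt ftxs.
Qed.


Lemma card_Er_ge r : r <= n -> q ^ (r * n.-1) <= #|Er F n r| * q ^ (r * r).
Proof.
move=> le_rn.
pose A := [set t : r.-tuple T | all [in fullv] t && free (t ++ [::])].
apply: (@leq_trans #|A|).
  by have := @card_free_ext_ge fullv [::] r (nil_free _); rewrite dim_rV addn0; apply.
apply: (@card_le_fibers _ (subsp F n) A (Er F n r) (fun t => <<t>>%VS)).
  by move=> t; rewrite !inE cats0 => /andP [_ ft]; rewrite dim_span_free // size_tuple.
move=> V; rewrite inE => /eqP dimV.
have -> : r * r = r * \dim V by rewrite dimV.
rewrite -card_tuples_in_vspace.
apply: subset_leq_card; apply/subsetP => t; rewrite !inE => /andP [_ /eqP <-].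
by apply/allP => x; apply: memv_span.
Qed.

Lemma card_Er_le r : #|Er F n r| * q ^ (r * r.-1) <= q ^ (n * r).
Proof.
pose A := [set t : r.-tuple T | free t].
apply: (@leq_trans #|A|); last first.
  by rewrite (leq_trans (max_card _)) // card_tuple card_mx mul1n -expnM.
apply: (@card_ge_fibers _ (subsp F n) A (Er F n r) (fun t => <<t>>%VS)).
  by move=> t; rewrite !inE => ft; rewrite dim_span_free // size_tuple.
move=> V; rewrite inE => /eqP dimV.
have := @card_free_ext_ge V [::] r (nil_free _); rewrite addn0 dimV leqnn => /(_ isT).
move/leq_trans; apply; apply: subset_leq_card; apply/subsetP => t.
rewrite !inE cats0 => /andP [tV ft]; rewrite ft /=.
by rewrite (span_free_eq tV ft) // size_tuple dimV.
Qed.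

Definition injdist_le rho : rel (subsp F n) := fun U V => (injdist U V <= rho).
Local Notation ball r rho := (nbhd (Er F n r) (injdist_le rho)).

Lemma injdistC (U V : subsp F n) : injdist U V = injdist V U.
Proof. by rewrite /injdist addvC minnC. Qed.

Lemma injdist_le_sym rho : symmetric (injdist_le rho).
Proof. by move=> U V; rewrite /injdist_le injdistC. Qed.

Lemma injdist_dim_eq (U V : subsp F n) r : \dim U = r -> \dim V = r ->
  injdist U V = \dim (U + V) - r.
Proof. by move=> dimU dimV; rewrite /injdist dimU dimV minnn. Qed.

Lemma span_subv_all (xs : seq T) (V : {vspace T}) :
  all [in V] xs -> (<<xs>> <= V)%VS.
Proof. by move=> /allP xsV; apply/span_subvP. Qed.

Lemma card_ball_le r rho (U : subsp F n) : U \in Er F n r -> rho <= r ->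
  #|ball r rho U| * q ^ ((r - rho) * (r - rho).-1 + rho * r.-1)
    <= q ^ ((r - rho) * r + rho * n).
Proof.
rewrite inE => /eqP dimU le_rho_r; set a := r - rho.
pose A := [set p : a.-tuple T * rho.-tuple T | all [in U] p.1 && free (p.2 ++ p.1)].
apply: (@leq_trans #|A|); last first.
  apply: (@leq_trans #|[set p : a.-tuple T * rho.-tuple T |
                         all [in U] p.1 && all [in fullv] p.2]|).
    apply: subset_leq_card; apply/subsetP => -[t1 t2]; rewrite !inE /= => /andP [-> _].
    by apply/allP => x _; rewrite memvf.
  rewrite (card_set_prod (fun t : a.-tuple T => all [in U] t)
                         (fun t : rho.-tuple T => all [in fullv] t)).
  by rewrite !card_tuples_in_vspace dimU dim_rV expnD.
apply: (@card_ge_fibers _ (subsp F n) A (ball r rho U) (fun p => <<p.2 ++ p.1>>%VS)).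
  move=> [t1 t2]; rewrite inE /= => /andP [t1U ft]; set V := <<t2 ++ t1>>%VS.
  have dimV : \dim V = r by rewrite dim_span_free // size_cat !size_tuple subnKC.
  have capUV : a <= \dim (U :&: V).
    rewrite -(size_tuple t1) -(dim_span_free (catr_free ft)) dimvS // subv_cap.
    by rewrite span_subv_all //= /V span_cat addvSr.
  rewrite !inE dimV eqxx /injdist_le (injdist_dim_eq dimU dimV).
  by have := dimv_sum_cap U V; rewrite dimU dimV; lia.
move=> V; rewrite !inE => /andP [/eqP dimV]; rewrite /injdist_le (injdist_dim_eq dimU dimV).
move=> dUV; have le_a_cap : a <= \dim (U :&: V).
  by have := dimv_sum_cap U V; rewrite dimU dimV; lia.
pose P1 (t1 : a.-tuple T) := all [in (U :&: V)%VS] t1 && free (t1 ++ [::]).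
pose R1 (t1 : a.-tuple T) (t2 : rho.-tuple T) := all [in V] t2 && free (t2 ++ t1).
apply: (@leq_trans #|[set p | P1 p.1 && R1 p.1 p.2]|); last first.
  apply: subset_leq_card; apply/subsetP => -[t1 t2].
  rewrite !inE /P1 /R1 /= cats0 => /andP [/andP [t1UV ft1] /andP [t2V ft]].
  have t1U : all [in U] t1 by apply: sub_all t1UV => x; rewrite memv_cap => /andP [].
  have t1V : all [in V] t1 by apply: sub_all t1UV => x; rewrite memv_cap => /andP [].
  rewrite t1U ft (@span_free_eq _ V) ?eqxx ?all_cat ?t1V ?t2V //.
  by rewrite size_cat !size_tuple subnKC.
rewrite expnD; apply: leq_trans (card_set_pair_ge _) => [|t1 /andP [_ ft1]]; last first.
  rewrite cats0 in ft1; have := @card_free_ext_ge V _ rho ft1.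
  rewrite size_tuple dimV subnKC // leqnn => /(_ isT) /leq_trans; apply.
  by apply: subset_leq_card; apply/subsetP => t2; rewrite !inE.
have := @card_free_ext_ge (U :&: V)%VS [::] a (nil_free _); rewrite addn0 => /(_ le_a_cap).
move=> P1_ge; rewrite leq_mul2r; apply/orP; right; apply: leq_trans P1_ge.
by rewrite leq_pexp2l ?(ltnW card_field_gt1) // leq_mul2l -!subn1 leq_sub2r ?orbT.
Qed.

Lemma span_extension_dims r rho (U : subsp F n) (t1 : (r - rho).-tuple T)
    (t2 : rho.-tuple T) :
  \dim U = r -> rho <= r -> all [in U] t1 -> free t1 -> free (t2 ++ vbasis U) ->
  \dim <<t2 ++ t1>> = r /\ \dim (U :&: <<t2 ++ t1>>) = r - rho.
Proof.
move=> dimU le_rho_r t1U ft1 ft2U; set V := <<t2 ++ t1>>%VS.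
have sum_ge : rho + r <= \dim (U + V).
  have <- : \dim <<t2 ++ vbasis U>> = rho + r.
    by rewrite dim_span_free // size_cat !size_tuple dimU.
  rewrite dimvS // span_cat (span_basis (vbasisP U)) subv_add addvSl andbT.
  by rewrite (subv_trans _ (addvSr U _)) // /V span_cat addvSl.
have cap_ge : r - rho <= \dim (U :&: V).
  rewrite -(size_tuple t1) -(dim_span_free ft1) dimvS // subv_cap span_subv_all //=.
  by rewrite /V span_cat addvSr.
have dimV_le : \dim V <= r.
  by rewrite (leq_trans (dim_span _)) // size_cat !size_tuple subnKC.
have := dimv_sum_cap U V; rewrite dimU.
by move: sum_ge cap_ge dimV_le; move: (\dim V) (\dim (U + V)) (\dim (U :&: V)); lia.
Qed.

Lemma card_ball_ge r rho (U : subsp F n) : U \in Er F n r -> rho <= r -> r + rho <= n ->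
  q ^ ((r - rho) * r.-1 + rho * n.-1)
    <= #|ball r rho U| * q ^ ((r - rho) * (r - rho) + rho * r).
Proof.
rewrite inE => /eqP dimU le_rho_r le_n; set a := r - rho.
pose P1 (t1 : a.-tuple T) := all [in U] t1 && free (t1 ++ [::]).
pose R1 (t1 : a.-tuple T) (t2 : rho.-tuple T) := all [in fullv] t2 && free (t2 ++ vbasis U).
pose A := [set p | P1 p.1 && R1 p.1 p.2].
have dimsA p : p \in A -> \dim <<p.2 ++ p.1>> = r /\ \dim (U :&: <<p.2 ++ p.1>>) = a.
  case: p => t1 t2; rewrite !inE /P1 /R1 /= cats0 => /andP [/andP [t1U ft1] /andP [_ ft]].
  exact: span_extension_dims.
apply: (@leq_trans #|A|).
  rewrite expnD; apply: leq_trans (card_set_pair_ge _) => [|t1 _]; last first.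
    have := @card_free_ext_ge fullv _ rho (basis_free (vbasisP U)).
    by rewrite dim_rV; apply; rewrite size_tuple dimU addnC.
  rewrite leq_mul2r (leq_trans _ (@card_free_ext_ge U [::] a (nil_free _) _)) ?orbT ?dimU //.
  by rewrite addn0 leq_subr.
apply: (@card_le_fibers _ (subsp F n) A (ball r rho U) (fun p => <<p.2 ++ p.1>>%VS)).
  move=> p /dimsA [dimV capUV].
  rewrite !inE dimV eqxx /injdist_le (injdist_dim_eq dimU dimV).
  by have := dimv_sum_cap U <<p.2 ++ p.1>>%VS; rewrite dimU dimV capUV; lia.
move=> V _; have [-> | [p0]] := set_0Vmem [set p in A | <<p.2 ++ p.1>>%VS == V].
  by rewrite cards0.
rewrite inE => /andP [/dimsA [dimV capUV] /eqP p0V]; rewrite p0V in dimV capUV.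
apply: (@leq_trans #|[set p : a.-tuple T * rho.-tuple T |
                       all [in (U :&: V)%VS] p.1 && all [in V] p.2]|).
  apply: subset_leq_card; apply/subsetP => -[t1 t2].
  rewrite !inE /P1 /= => /andP [/andP [/andP [t1U _] _] /eqP <-] /=.
  apply/andP; split; apply/allP => x xt; last by rewrite memv_span // mem_cat xt.
  by rewrite memv_cap (allP t1U) // memv_span // mem_cat xt orbT.
rewrite (card_set_prod (fun t : a.-tuple T => all [in (U :&: V)%VS] t)
                       (fun t : rho.-tuple T => all [in V] t)).
by rewrite !card_tuples_in_vspace capUV dimV expnD.
Qed.

Lemma covering_codeE r rho (C : {set subsp F n}) : covering_code r rho C =
  [&& C \subset Er F n r, 0 < #|C| & Er F n r \subset covered (injdist_le rho) C].
Proof.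
by congr [&& _, _ & _]; apply/forall_inP/subsetP => covC U /covC; rewrite inE.
Qed.

Lemma K_C_le r rho (C : {set subsp F n}) : covering_code r rho C -> K_C F n r rho <= #|C|.
Proof. by move=> Ccov; rewrite /K_C -minEnat -leEnat; apply: bigmin_le_cond. Qed.

Lemma K_C_ge r rho P Q :
  (forall U, U \in Er F n r -> #|ball r rho U| * Q <= P) ->
  #|Er F n r| * Q <= K_C F n r rho * P.
Proof.
move=> ball_le; rewrite /K_C; elim/big_ind: _ => [| x y | C].
- have [-> | [U UE]] := set_0Vmem (Er F n r); first by rewrite cards0.
  rewrite leq_mul2l (leq_trans _ (ball_le U UE)) ?orbT // leq_pmull // card_gt0.
  by apply/set0Pn; exists U; rewrite inE UE /injdist_le /injdist addvv minnn subnn.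
- by rewrite /minn; case: ifP.
rewrite covering_codeE => /and3P [CE _ EC].
rewrite (leq_trans (leq_mul (card_le_sum_nbhd (@injdist_le_sym rho) EC) (leqnn Q))) //.
by rewrite big_distrl -sum_nat_const leq_sum // => c cC; apply/ball_le/(subsetP CE).
Qed.

Lemma K_C_le_greedy r rho b k : 0 < b ->
  (forall U, U \in Er F n r -> b <= #|ball r rho U|) -> #|Er F n r| < 2 ^ k ->
  K_C F n r rho <= (#|Er F n r| %/ b).+1 * k.
Proof.
move=> b_gt0 ball_ge Er_lt.
have [Er0 | [U0 U0E]] := set_0Vmem (Er F n r).
  by rewrite (leq_trans _ (leq0n _)) // /K_C -minEnat -leEnat Er0 cards0 bigmin_le_id.
have [C [CE Csize EC]] := greedy_cover (@injdist_le_sym rho) b_gt0 ball_ge (subxx _) Er_lt.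
apply: leq_trans Csize; apply: K_C_le; rewrite covering_codeE CE EC andbT /=.
move: (subsetP EC U0 U0E); rewrite inE card_gt0 => /exists_inP [c cC _].
by apply/set0Pn; exists c.
Qed.

Lemma K_C_ge_pow r rho : rho <= r -> r <= n ->
  q ^ (r * n + ((r - rho) * (r - rho) + rho * r))
    <= K_C F n r rho * q ^ ((r - rho) * r + rho * n + r + (r * r + r)).
Proof.
move=> le_rho_r le_r_n; set a := r - rho.
have q_gt0 : 0 < q := ltnW card_field_gt1.
have Er_ge : q ^ (r * n) <= #|Er F n r| * q ^ (r * r + r).
  rewrite expnD mulnA (leq_trans _ (leq_mul (card_Er_ge le_r_n) (leqnn _))) //.
  by rewrite -expnD leq_pexp2l // leq_mul_predr.
have ball_le U : U \in Er F n r ->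
    #|ball r rho U| * q ^ (a * a + rho * r) <= q ^ (a * r + rho * n + r).
  move=> UE; apply: (@leq_trans (#|ball r rho U| * q ^ (a * a.-1 + rho * r.-1 + r))).
    rewrite leq_mul2l leq_pexp2l ?orbT //.
    by have := leq_mul_predr a a; have := leq_mul_predr rho r; rewrite /a; lia.
  rewrite (expnD q _ r) (expnD q (a * r + rho * n) r) mulnA leq_mul2r.
  by rewrite card_ball_le ?orbT.
rewrite expnD (leq_trans (leq_mul Er_ge (leqnn _))) // mulnAC.
rewrite (expnD q (a * r + rho * n + r) (r * r + r)) mulnA.
by rewrite leq_mul2r (K_C_ge ball_le) orbT.
Qed.

Lemma card_Er_le_pow r : #|Er F n r| * q ^ (r * r) <= q ^ (n * r + r).
Proof.
apply: (@leq_trans (#|Er F n r| * q ^ (r * r.-1 + r))).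
  by rewrite leq_mul2l (leq_pexp2l (ltnW card_field_gt1) (leq_mul_predr r r)) orbT.
by rewrite !expnD mulnA leq_mul2r card_Er_le orbT.
Qed.

Lemma K_C_mul_le r rho b : r <= n -> 0 < b -> b <= #|Er F n r| ->
  (forall U, U \in Er F n r -> b <= #|ball r rho U|) ->
  K_C F n r rho * b <= #|Er F n r| * q ^ (n.*2 + 2).
Proof.
move=> le_r_n b_gt0 b_le_N ball_ge; set N := #|Er F n r|.
have q_gt0 : 0 < q := ltnW card_field_gt1.
(* [N <= q ^ (n * n + n) < 2 ^ k], so the greedy bound only loses [2 k <= q ^ (2 n + 2)]. *)
set k := (q * (n * n + n)).+1.
have N_lt : N < 2 ^ k.
  apply: leq_ltn_trans (exp_lt_exp2_mul q (n * n + n)).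
  apply: (@leq_trans (N * q ^ (r * r))); first by rewrite leq_pmulr // expn_gt0 q_gt0.
  by rewrite (leq_trans (card_Er_le_pow r)) // leq_pexp2l //; nia.
apply: (@leq_trans ((N %/ b).+1 * b * k)).
  by rewrite mulnAC leq_mul2r (K_C_le_greedy b_gt0 ball_ge N_lt) orbT.
rewrite mulSn addnC (leq_trans (leq_mul (leq_add (leq_trunc_div N b) b_le_N) (leqnn k))) //.
by rewrite addnn -mul2n mulnAC mulnC leq_mul2l (double_succ_le_exp n card_field_gt1) orbT.
Qed.

Lemma K_C_le_pow r rho : rho <= r -> r + rho <= n ->
  K_C F n r rho * q ^ ((r - rho) * r + rho * n + r * r)
    <= q ^ (n * r + r + (n.*2 + 2) + ((r - rho) * (r - rho) + rho * r + r)).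
Proof.
move=> le_rho_r le_n; set a := r - rho; set N := #|Er F n r|; set K := K_C F n r rho.
have q_gt0 : 0 < q := ltnW card_field_gt1.
have le_r_n : r <= n by apply: leq_trans le_n; apply: leq_addr.
have N_gt0 : 0 < N.
  rewrite lt0n; apply/eqP => N0; move: (card_Er_ge le_r_n).
  by rewrite -/N N0 mul0n leqn0 expn_eq0 eqn0Ngt q_gt0.
have /set0Pn [U0 U0E] : Er F n r != set0 by rewrite -card_gt0.
have [V VE Vmin] := arg_minnP (fun U => #|ball r rho U|) U0E.
set b := #|ball r rho V| in Vmin.
have ball_ge : q ^ (a * r + rho * n) <= b * q ^ (a * a + rho * r + r).
  apply: (@leq_trans (q ^ (a * r.-1 + rho * n.-1 + r))).
    rewrite leq_pexp2l //.
    by have := leq_mul_predr a r; have := leq_mul_predr rho n; rewrite /a; lia.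
  rewrite (expnD q _ r) (expnD q (a * a + rho * r) r) mulnA leq_mul2r.
  by rewrite card_ball_ge ?orbT.
have b_gt0 : 0 < b.
  rewrite lt0n; apply/eqP => b0; move: ball_ge.
  by rewrite b0 mul0n leqn0 expn_eq0 eqn0Ngt q_gt0.
have b_le_N : b <= N by apply/subset_leq_card/subsetP => U; rewrite inE => /andP [].
have Kb := K_C_mul_le le_r_n b_gt0 b_le_N Vmin.
apply: (@leq_trans (K * b * q ^ (a * a + rho * r + r) * q ^ (r * r))).
  by rewrite expnD mulnA leq_mul2r -mulnA leq_mul2l ball_ge !orbT.
apply: (@leq_trans (N * q ^ (n.*2 + 2) * q ^ (a * a + rho * r + r) * q ^ (r * r))).
  by rewrite !leq_mul2r Kb !orbT.
rewrite (expnD q (n * r + r + (n.*2 + 2))) (expnD q (n * r + r)).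
rewrite [leqLHS](_ : _ = N * q ^ (r * r) * (q ^ (n.*2 + 2) * q ^ (a * a + rho * r + r))).
  by rewrite -[leqRHS]mulnA leq_mul2r card_Er_le_pow orbT.
by lia.
Qed.

End Subspaces.

(* Imported only now: the analysis library shadows [subsetP], [setT] and the
   notation [<<s _>>] used above. *)
From mathcomp Require Import all_classical all_reals all_analysis ring lra.
Import numFieldNormedType.Exports.
Local Open Scope ring_scope.

Section LogBounds.
Variables (R : realType) (F : finFieldType).
Local Notation q := (#|F|%:R : R).
Local Notation lq := (logq q).

Lemma q_gt1R : 1 < q.
Proof. by rewrite ltr1n card_field_gt1. Qed.

Lemma lnq_gt0 : 0 < ln q.
Proof. exact/ln_gt0/q_gt1R. Qed.

Lemma logq1 : lq 1 = 0.
Proof. by rewrite /logq ln1 mul0r. Qed.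

Lemma logq_le x y : 0 < x -> x <= y -> lq x <= lq y.
Proof.
move=> x_gt0 le_xy; rewrite /logq ler_pM2r ?invr_gt0 ?lnq_gt0 // ler_ln ?posrE //.
exact: lt_le_trans le_xy.
Qed.

Lemma logq_expn k : lq (q ^+ k) = k%:R.
Proof.
have ln_neq0 : ln q != 0 by rewrite gt_eqF ?lnq_gt0.
by rewrite /logq lnXn ?(lt_trans ltr01 q_gt1R) // mulrnAl divff.
Qed.

Lemma logq_natM x y : (0 < x)%N -> (0 < y)%N -> lq (x * y)%:R = lq x%:R + lq y%:R.
Proof. by move=> x_gt0 y_gt0; rewrite /logq natrM lnM ?posrE ?ltr0n // mulrDl. Qed.

Lemma logq_nat_le x y e f : (0 < x)%N -> (0 < y)%N ->
  (x * #|F| ^ e <= y * #|F| ^ f)%N -> lq x%:R + e%:R <= lq y%:R + f%:R.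
Proof.
have q_gt0 : (0 < #|F|)%N := ltnW (card_field_gt1 F).
move=> x_gt0 y_gt0 le_xy; rewrite -(logq_expn e) -(logq_expn f) -!natrX.
rewrite -!logq_natM ?expn_gt0 ?q_gt0 //.
by rewrite logq_le ?ltr0n ?muln_gt0 ?expn_gt0 ?x_gt0 ?q_gt0 // ler_nat.
Qed.

Lemma logq_K_C_bounds n r rho : (rho <= r)%N -> (r + rho <= n)%N ->
  r%:R * (n%:R - r%:R) - rho%:R * (n%:R - rho%:R) - 2 * r%:R <= lq (K_C F n r rho)%:R
  <= r%:R * (n%:R - r%:R) - rho%:R * (n%:R - rho%:R) + 2 * r%:R + 2 * n%:R + 2.
Proof.
move=> le_rho_r le_n; have le_r_n : (r <= n)%N by apply: leq_trans le_n; apply: leq_addr.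
have lo := K_C_ge_pow F le_rho_r le_r_n; have hi := K_C_le_pow F le_rho_r le_n.
have K_gt0 : (0 < K_C F n r rho)%N.
  rewrite lt0n; apply/eqP => K0; move: lo.
  by rewrite K0 mul0n leqn0 expn_eq0 eqn0Ngt (ltnW (card_field_gt1 F)).
rewrite -[X in (X <= _)%N]mul1n in lo; rewrite -[X in (_ <= X)%N]mul1n in hi.
have := logq_nat_le (ltn0Sn 0) K_gt0 lo; have := logq_nat_le K_gt0 (ltn0Sn 0) hi.
rewrite logq1 -!mul2n !natrD !natrM !natrB //; move=> upper lower.
by apply/andP; split; nra.
Qed.

Lemma gauss_binom_bounds n r : (r <= n)%N ->
  (q ^+ (n - r)) ^+ r <= gauss_binom q n r <= (q ^+ (n - r).+1) ^+ r.
Proof.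
move=> le_r_n; set m := (n - r)%N; have nE : n = (m + r)%N by rewrite subnK.
have q_gt0 : 0 < q := lt_trans ltr01 q_gt1R.
have q_ge2 : 2 <= q by rewrite ler_nat (card_field_gt1 F).
have factor_bounds (i : 'I_r) :
    q ^+ m <= (q ^+ n - q ^+ i) / (q ^+ r - q ^+ i) <= q ^+ m.+1.
  have den_gt0 : 0 < q ^+ r - q ^+ i by rewrite subr_gt0 (ltr_eXn2l q_gt1R).
  have qi_gt0 : 0 < q ^+ i := exprn_gt0 _ q_gt0.
  have qm_ge1 : 1 <= q ^+ m := exprn_ege1 _ (ltW q_gt1R).
  have qi_le : q * q ^+ i <= q ^+ r by rewrite -exprS (ler_eXn2l q_gt1R).
  rewrite nE exprD ler_pdivlMr // ler_pdivrMr // exprS; apply/andP; split; first by nra.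
  have : 0 <= (q - 2) * q ^+ m * q ^+ r by rewrite !mulr_ge0 ?exprn_ge0 ?subr_ge0 ?(ltW q_gt0).
  by nra.
have prod_constE (x : R) : x ^+ r = \prod_(i < r) x by rewrite prodr_const card_ord.
rewrite /gauss_binom (prod_constE (q ^+ m)) (prod_constE (q ^+ m.+1)); apply/andP; split.
  apply: ler_prod => i _; have /andP [lo _] := factor_bounds i.
  by rewrite lo andbT exprn_ge0 ?(ltW q_gt0).
apply: ler_prod => i _; have /andP [lo ->] := factor_bounds i.
by rewrite andbT (le_trans _ lo) // exprn_ge0 ?(ltW q_gt0).
Qed.

Lemma logq_gauss_binom_bounds n r : (r <= n)%N ->
  r%:R * (n%:R - r%:R) <= lq (gauss_binom q n r) <= r%:R * (n%:R - r%:R) + r%:R.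
Proof.
move=> le_r_n; have /andP [lo hi] := gauss_binom_bounds le_r_n.
have pow_gt0 : 0 < (q ^+ (n - r)) ^+ r by rewrite !exprn_gt0 // (lt_trans ltr01 q_gt1R).
have := logq_le pow_gt0 lo; have := logq_le (lt_le_trans pow_gt0 lo) hi.
rewrite -!exprM !logq_expn !natrM -natr1 !natrB //.
by move=> upper lower; apply/andP; split; nra.
Qed.

End LogBounds.

Local Open Scope classical_set_scope.

Lemma cvg_harmonic_rate (R : realType) (u : R ^nat) (l c : R) :
  (forall n, (0 < n)%N -> `|u n - l| <= c / n%:R) -> u @ \oo --> l.
Proof.
move=> u_near; apply/cvgrPdist_le => e e_gt0.
exists (Num.truncn (c / e)).+1 => // n /= le_n.
have n_gt0 : (0 < n)%N by apply: leq_trans le_n.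
rewrite distrC (le_trans (u_near n n_gt0)) // ler_pdivrMr ?ltr0n // mulrC -ler_pdivrMr //.
by apply/ltW/(lt_le_trans (truncnS_gt _)); rewrite ler_nat.
Qed.

Lemma dist_div_sqr_le (R : realFieldType) (A B c N : R) : 0 < N ->
  -(c * N) <= A - N ^+ 2 * B <= c * N -> `|A / N ^+ 2 - B| <= c / N.
Proof.
move=> N_gt0 /andP [lo hi].
have -> : A / N ^+ 2 - B = (A - N ^+ 2 * B) / N ^+ 2 by field; rewrite gt_eqF.
have -> : c / N = (c * N) / N ^+ 2 by field; rewrite gt_eqF.
rewrite normrM (ger0_norm (x := (N ^+ 2)^-1)) ?invr_ge0 ?exprn_ge0 ?(ltW N_gt0) //.
by rewrite ler_pM2r ?invr_gt0 ?exprn_gt0 // ler_norml lo hi.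
Qed.

Lemma floor_quad_bounds (R : realFieldType) (a N x : R) :
  0 <= N -> 0 <= a -> a <= 1 / 2 -> 0 <= x -> x <= a * N -> a * N < x + 1 ->
  - N <= x * (N - x) - N ^+ 2 * (a * (1 - a)) <= 0.
Proof.
move=> N_ge0 a_ge0 a_le x_ge0 x_le x_gt.
set d := a * N - x; set e := N - a * N - x.
have d_ge0 : 0 <= d by rewrite /d; lra.
have d_le1 : d <= 1 by rewrite /d; lra.
have e_ge0 : 0 <= e by rewrite /e; nra.
have e_leN : e <= N by rewrite /e; lra.
have de_leN : d * e <= N by rewrite (le_trans (ler_wpM2r e_ge0 d_le1)) ?mul1r.
have -> : x * (N - x) - N ^+ 2 * (a * (1 - a)) = - (d * e) by rewrite /d /e; ring.
by rewrite lerN2 oppr_le0 de_leN mulr_ge0.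
Qed.

Lemma floor_quad_err (R : realType) (a : R) n : 0 <= a -> a <= 1 / 2 ->
  - n%:R <= (Num.truncn (a * n%:R))%:R * (n%:R - (Num.truncn (a * n%:R))%:R)
            - n%:R ^+ 2 * (a * (1 - a)) <= 0.
Proof.
move=> a_ge0 a_le; have an_ge0 : 0 <= a * n%:R by rewrite mulr_ge0.
have /andP [lo hi] := truncn_itv an_ge0; rewrite -natr1 in hi.
exact: floor_quad_bounds.
Qed.

Section Rates.
Variables (R : realType) (F : finFieldType) (r' rho' : R).
Hypotheses (rho'_ge0 : 0 <= rho') (rho'_le_r' : rho' <= r').
Hypotheses (r'_le : r' <= 1 / 2) (r'_gt0 : 0 < r').
Local Notation q := (#|F|%:R : R).
Local Notation r_ n := (Num.truncn (r' * n%:R)).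
Local Notation rho_ n := (Num.truncn (rho' * n%:R)).

Lemma floor_dims n : (rho_ n <= r_ n)%N /\ (r_ n + rho_ n <= n)%N.
Proof.
have rn_ge0 : 0 <= r' * n%:R by rewrite mulr_ge0 ?(ltW r'_gt0).
have /andP [r_le _] := truncn_itv rn_ge0.
split; first by apply: le_truncn; rewrite ler_wpM2r.
rewrite -(ler_nat R) natrD.
have : (rho_ n)%:R <= (r_ n)%:R :> R by rewrite ler_nat; apply: le_truncn; rewrite ler_wpM2r.
have : r' * n%:R <= 1 / 2 * n%:R := ler_wpM2r (ler0n _ _) r'_le.
lra.
Qed.

Lemma logq_K_C_rate n : (0 < n)%N ->
  `|logq q (K_C F n (r_ n) (rho_ n))%:R / n%:R ^+ 2 - (r' * (1 - r') - rho' * (1 - rho'))|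
    <= 10 / n%:R.
Proof.
move=> n_gt0; have [le_rho_r le_n] := floor_dims n.
have /andP [lo hi] := logq_K_C_bounds R F le_rho_r le_n.
have /andP [qr_lo qr_hi] := floor_quad_err n (ltW r'_gt0) r'_le.
have /andP [qp_lo qp_hi] := floor_quad_err n rho'_ge0 (le_trans rho'_le_r' r'_le).
have : (r_ n + rho_ n)%:R <= n%:R :> R by rewrite ler_nat.
rewrite natrD => sum_le; have n_ge1 : 1 <= n%:R :> R by rewrite ler1n.
have rho_ge0 : 0 <= (rho_ n)%:R :> R := ler0n _ _.
by apply: dist_div_sqr_le; rewrite ?ltr0n //; apply/andP; split; lra.
Qed.

Lemma logq_gauss_rate n : (0 < n)%N ->
  `|logq q (gauss_binom q n (r_ n)) / n%:R ^+ 2 - r' * (1 - r')| <= 3 / n%:R.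
Proof.
move=> n_gt0; have [_ le_n] := floor_dims n.
have le_r_n : (r_ n <= n)%N by apply: leq_trans le_n; apply: leq_addr.
have /andP [lo hi] := logq_gauss_binom_bounds R F le_r_n.
have /andP [qr_lo qr_hi] := floor_quad_err n (ltW r'_gt0) r'_le.
have : (r_ n)%:R <= n%:R :> R by rewrite ler_nat.
move=> r_le; have n_ge1 : 1 <= n%:R :> R by rewrite ler1n.
by apply: dist_div_sqr_le; rewrite ?ltr0n //; apply/andP; split; lra.
Qed.

(* At [n = 0] both sides vanish, the right one through [x / 0 = 0]. *)
Lemma kC_seq_ratio :
  kC_seq F r' rho' = (fun n => logq q (K_C F n (r_ n) (rho_ n))%:R / n%:R ^+ 2)
                     \* (fun n => (logq q (gauss_binom q n (r_ n)) / n%:R ^+ 2)^-1).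
Proof.
apply/funext => -[|n] /=; last by rewrite invf_div mulrA divfK // expf_neq0 // pnatr_eq0.
rewrite /kC_seq /= expr0n /= !invr0 !mulr0 truncn0 /gauss_binom big_ord0.
by rewrite /logq ln1 !mul0r invr0 mulr0.
Qed.

Lemma kC_seq_cvg :
  kC_seq F r' rho' @ \oo --> (r' * (1 - r') - rho' * (1 - rho')) / (r' * (1 - r')).
Proof.
have den_neq0 : r' * (1 - r') != 0.
  by rewrite gt_eqF // mulr_gt0 //; move: r'_le; lra.
rewrite kC_seq_ratio; apply: cvgM; first exact/cvg_harmonic_rate/logq_K_C_rate.
exact/(cvgV den_neq0)/cvg_harmonic_rate/logq_gauss_rate.
Qed.

End Rates.

Theorem proposition11 (R : realType) (F : finFieldType) (r' rho' : R) :
  0 <= rho' -> rho' <= r' -> r' <= 1 / 2 -> 0 < r' ->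
  kC F r' rho' = (1 - (rho' * (1 - rho')) / (r' * (1 - r')))%:E.
Proof.
move=> rho'_ge0 rho'_le_r' r'_le r'_gt0.
have := kC_seq_cvg F rho'_ge0 rho'_le_r' r'_le r'_gt0.
set l := (r' * (1 - r') - rho' * (1 - rho')) / (r' * (1 - r')) => seq_cvg.
have seq_ecvg : (fun n => (kC_seq F r' rho' n)%:E) @ \oo --> l%:E.
  by apply: cvg_EFin; [exact: nearW | exact: seq_cvg].
rewrite /kC (cvg_limn_einf_sup seq_ecvg).1 /l; congr (_%:E); field.
by rewrite subr_eq0 !gt_eqF //; lra.
Qed.
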